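(* Let $\mathcal O$ be a complete discrete valuation ring of characteristic zero with residue field of characteristic $p>0$. Let $\Lambda$ be an $\mathcal O$-order, $G$ a finite group and $\Gamma$ an $\mathcal O$-linear crossed product of $\Lambda$ and $G$. If $e\in\Lambda$ is an idempotent such that $e\Lambda\cong\alpha(e)\Lambda$ as right $\Lambda$-modules for every $\alpha\in\operatorname{Aut}_{\mathcal O}(\Lambda)$, then $e\Gamma e$ is an $\mathcal O$-linear crossed product of $e\Lambda e$ and $G$.
   Context: An $\mathcal O$-order is an $\mathcal O$-algebra free and finitely generated as an $\mathcal O$-module. A crossed product of a ring $R$ and $G$ is a $G$-graded ring $A=\bigoplus_{g\in G}A_g$ with $A_1=R$ such that each $A_g$ contains a unit of $A$; it is $\mathcal O$-linear if $R$ is an $\mathcal O$-algebra and the image of $\mathcal O$ under $R\hookrightarrow A$ lies in the centre of $A$. Here $e\Gamma e$ is graded by $(e\Gamma e)_g=e\Gamma_g e$. *)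

From HB Require Import structures.
From mathcomp Require Import all_boot all_order fingroup all_algebra.
Set Implicit Arguments. Unset Strict Implicit. Unset Printing Implicit Defensive.
Import GRing.Theory.
Local Open Scope ring_scope.

Definition rdvd (O : comPzRingType) (y x : O) : Prop := exists c, x = c * y.

Definition is_DVR_unif (O : idomainType) (pi : O) : Prop :=
  [/\ pi != 0, pi \isn't a GRing.unit &
      forall x : O, x != 0 -> exists u n, u \is a GRing.unit /\ x = u * pi ^+ n].

Definition pi_complete (O : idomainType) (pi : O) : Prop :=
  forall s : nat -> O,
    (forall n, exists N, forall m k, (N <= m)%N -> (N <= k)%N ->
        rdvd (pi ^+ n) (s m - s k)) ->
    exists l, forall n, exists N, forall m, (N <= m)%N -> rdvd (pi ^+ n) (s m - l).

(* Complete DVR of characteristic 0 whose residue field O/(pi) has characteristic p. *)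
Definition complete_DVR_char0_residue (O : idomainType) (p : nat) : Prop :=
  exists pi : O,
    [/\ is_DVR_unif pi, pi_complete pi,
        (forall n : nat, n%:R = 0 :> O -> n = 0%N),
        prime p & rdvd pi p%:R].

Definition is_O_order (O : comNzRingType) (L : algType O) : Prop :=
  exists n (b : 'I_n -> L),
    (forall x : L, exists c : 'I_n -> O, x = \sum_(i < n) c i *: b i) /\
    (forall c : 'I_n -> O, \sum_(i < n) c i *: b i = 0 -> forall i, c i = 0).

Definition is_O_aut (O : comNzRingType) (L : algType O) (a : L -> L) : Prop :=
  [/\ bijective a, (forall x y, a (x + y) = a x + a y),
      (forall x y, a (x * y) = a x * a y), a 1 = 1 &
      (forall (k : O) x, a (k *: x) = k *: a x)].

Definition rideal (R : nzRingType) (x : R) : R -> Prop := fun y => exists a, y = x * a.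

Definition right_mod_iso (R : nzRingType) (M N : R -> Prop) : Prop :=
  exists f : R -> R,
    [/\ (forall x, M x -> N (f x)),
        (forall y, N y -> exists x, M x /\ f x = y),
        (forall x y, M x -> M y -> f x = f y -> x = y),
        (forall x y, M x -> M y -> f (x + y) = f x + f y) &
        (forall x a, M x -> f (x * a) = f x * a)].

(* Crossed products, in a form applicable both to a ring T itself and to a
   corner ring (S, one) of T:
   - S : the carrier (subset of T) of the ring, with identity [one];
   - A g : the homogeneous component of degree g;
   - the base ring is the subring B of L (identity oneB), embedded by iota
     onto the degree-1 component;
   - each component contains a unit of the ring (S, one);
   - O-linear: the image of O (k |-> iota (k *: oneB)) is central in S. *)
Definition crossed_product_in (O : comNzRingType) (L : algType O)
    (T : nzRingType) (gT : finGroupType)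
    (S : T -> Prop) (one : T) (A : gT -> T -> Prop)
    (B : L -> Prop) (oneB : L) (iota : L -> T) : Prop :=
  [/\
      [/\ (forall g x, A g x -> S x),
      (forall g, A g 0 /\ forall x y, A g x -> A g y -> A g (x - y)) &
      (forall g h x y, A g x -> A h y -> A (g * h)%g (x * y))],
      (forall x, S x -> exists f : gT -> T, (forall g, A g (f g)) /\ x = \sum_(g : gT) f g) /\
      (forall f : gT -> T, (forall g, A g (f g)) -> \sum_(g : gT) f g = 0 ->
           forall g, f g = 0),
      [/\ (forall x, A 1%g x <-> exists2 b, B b & x = iota b),
          (forall a b, B a -> B b -> iota a = iota b -> a = b),
          (forall a b, B a -> B b -> iota (a + b) = iota a + iota b),
          (forall a b, B a -> B b -> iota (a * b) = iota a * iota b) &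
          iota oneB = one],
      (forall g, exists u, A g u /\ exists v, S v /\ u * v = one /\ v * u = one) &
      (forall (k : O) x, S x -> iota (k *: oneB) * x = x * iota (k *: oneB))].

From HB Require Import structures.
From mathcomp Require Import all_boot all_order fingroup all_algebra.

(* A homogeneous unit u of degree g has a homogeneous inverse v, so x |-> u x v
   preserves the degree-1 component and is an O-algebra automorphism a of
   Lambda. The hypothesis gives eLambda ~ a(e)Lambda, i.e. elements x in
   eLambda a(e), y in a(e)Lambda e with xy = e and yx = a(e) = u e u^-1; then
   xu is a unit of degree g in eGamma e with inverse u^-1 y. *)

Set Implicit Arguments.
Unset Strict Implicit.
Unset Printing Implicit Defensive.

Import GRing.Theory.
Local Open Scope ring_scope.

Definition corner (R : nzRingType) (e : R) : R -> Prop :=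
  fun y => exists x, y = e * x * e.

Definition corner_component (T : nzRingType) (gT : finGroupType)
    (A : gT -> T -> Prop) (e : T) : gT -> T -> Prop :=
  fun g y => exists x, A g x /\ y = e * x * e.

Lemma right_mod_iso_idem_equiv (R : nzRingType) (e f : R) :
    e * e = e -> f * f = f -> right_mod_iso (rideal e) (rideal f) ->
  exists x y, [/\ e * x = x, y * e = y, x * y = e & y * x = f].
Proof.
move=> ee ff [phi [phiM phiS phiI _ phiR]].
have eLe : rideal e e by exists 1; rewrite mulr1.
have [c cE] := phiM e eLe.
have [x [[d dE] phix]] := phiS f (ex_intro _ 1 (esym (mulr1 f))).
have ex : e * x = x by rewrite dE mulrA ee.
have fy : f * phi e = phi e by rewrite cE mulrA ff.
exists x, (phi e); split=> //.
- by rewrite -phiR // ee.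
- apply: phiI => //; first by exists (d * phi e); rewrite dE mulrA.
  by rewrite phiR ?phix //; exists d.
- by rewrite -phiR // ex.
Qed.

Lemma conj_idempotent_corner_unit (R : nzRingType) (e u v x y : R) :
    u * v = 1 -> v * u = 1 -> e * x = x -> y * e = y ->
    x * y = e -> y * x = u * e * v ->
  [/\ x * u = e * (x * u) * e, v * y = e * (v * y) * e,
      x * u * (v * y) = e & v * y * (x * u) = e].
Proof.
move=> uv vu ex ye xy yx.
have xue : x * u * e = x * u.
  have -> : x * u * e = x * (u * e * v) * u by rewrite !mulrA -(mulrA _ v u) vu mulr1.
  by rewrite -yx mulrA xy ex.
have evy : e * (v * y) = v * y.
  have -> : e * (v * y) = v * (u * e * v) * y by rewrite !mulrA vu mul1r.
  by rewrite -yx -!mulrA xy ye.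
split.
- by rewrite -mulrA xue mulrA ex.
- by rewrite evy -mulrA ye.
- by rewrite mulrA -(mulrA x) uv mulr1.
- by rewrite mulrA -(mulrA v) yx !mulrA vu mul1r -mulrA vu mulr1.
Qed.

Lemma corner_idem (R : nzRingType) (e x : R) :
  e * e = e -> corner e x -> e * x = x /\ x * e = x.
Proof. by move=> ee [y ->]; rewrite !mulrA ee -!mulrA ee. Qed.

Section CrossedProduct.

Variables (O : comNzRingType) (L : algType O) (gT : finGroupType) (T : nzRingType).
Variables (iota : {rmorphism L -> T}) (A : gT -> T -> Prop).
Hypothesis hG : crossed_product_in (fun _ => True) 1 A (fun _ => True) 1 iota.

Lemma component0 g : A g 0.
Proof. by case: hG => [[_ hA _] _ _ _ _]; case: (hA g). Qed.

Lemma componentB g x y : A g x -> A g y -> A g (x - y).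
Proof. by case: hG => [[_ hA _] _ _ _ _]; case: (hA g) => _; apply. Qed.

Lemma componentM g h x y : A g x -> A h y -> A (g * h)%g (x * y).
Proof. by case: hG => [[_ _ hM] _ _ _ _]; apply: hM. Qed.

Lemma component_decomposition x :
  exists c : gT -> T, (forall g, A g (c g)) /\ x = \sum_g c g.
Proof. by case: hG => [_ [hdec _] _ _ _]; apply: hdec. Qed.

Lemma component_sum_eq0 (c : gT -> T) :
  (forall g, A g (c g)) -> \sum_g c g = 0 -> forall g, c g = 0.
Proof. by case: hG => [_ [_ huniq] _ _ _]; apply: huniq. Qed.

Lemma component1P x : A 1%g x <-> exists b, x = iota b.
Proof.
case: hG => [_ _ [h1 _ _ _ _] _ _].
by split=> [/h1 [b _ ->] | [b ->]]; [exists b | apply/h1; exists b].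
Qed.

Lemma iota_inj : injective iota.
Proof. by case: hG => [_ _ [_ hinj _ _ _] _ _] a b; apply: hinj. Qed.

Lemma homogeneous_unit_exists g :
  exists u, A g u /\ exists v, u * v = 1 /\ v * u = 1.
Proof.
case: hG => [_ _ _ hunit _].
by have [u [Au [v [_ uv]]]] := hunit g; exists u; split=> //; exists v.
Qed.

Lemma iota_scalar_central (k : O) x : iota (k *: 1) * x = x * iota (k *: 1).
Proof. by case: hG => [_ _ _ _ hlin]; apply: hlin. Qed.

Lemma component_iota b : A 1%g (iota b).
Proof. by apply/component1P; exists b. Qed.

Lemma componentMiota g x b : A g x -> A g (x * iota b).
Proof. by move=> Ax; rewrite -[g]mulg1; apply: componentM Ax (component_iota b). Qed.

Lemma componentiotaM g x b : A g x -> A g (iota b * x).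
Proof. by move=> Ax; rewrite -[g]mul1g; apply: componentM (component_iota b) Ax. Qed.

Lemma homogeneous_unit_inv g u v :
  A g u -> u * v = 1 -> v * u = 1 -> A g^-1%g v.
Proof.
move=> Au uv vu; have [c [Ac vE]] := component_decomposition v.
(* Comparing degrees in u * v = 1 forces u * c h = 0 for h != g^-1. *)
pose d k := u * c (g^-1 * k)%g - (k == 1%g)%:R.
have Ad k : A k (d k).
  apply: componentB; first by have := componentM Au (Ac (g^-1 * k)%g); rewrite mulKVg.
  by case: eqP => [->|_]; [rewrite -(rmorph1 iota); apply: component_iota | apply: component0].
have d0 : \sum_k d k = 0.
  rewrite sumrB -mulr_sumr (reindex_inj (mulgI g)) /=.
  under eq_bigr do rewrite mulKg.
  rewrite -vE uv.
  by rewrite (bigD1 1%g) //= eqxx big1 ?addr0 ?subrr // => k /negbTE ->.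
have c0 h : h != g^-1%g -> c h = 0.
  move=> hg; have := component_sum_eq0 Ad d0 (g * h)%g.
  rewrite /d mulKg; case: eqP => [gh1 | _ uc].
    by case/eqP: hg; rewrite -(mulKg g h) gh1 mulg1.
  by rewrite -[c h]mul1r -vu -mulrA -[u * c h]subr0 uc mulr0.
by rewrite vE (bigD1 g^-1%g) //= big1 ?addr0 // => h /c0.
Qed.

Lemma homogeneous_unit_conj_aut g u v :
    A g u -> u * v = 1 -> v * u = 1 ->
  exists a : L -> L, is_O_aut a /\ forall x, iota (a x) = u * iota x * v.
Proof.
move=> Au uv vu; have Av := homogeneous_unit_inv Au uv vu.
have conj_iota (w w' : T) h x : A h w -> A h^-1%g w' -> exists y, iota y == w * iota x * w'.
  move=> Aw Aw'; have /component1P [y yE] : A 1%g (w * iota x * w').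
    by rewrite -(mulgV h); apply: componentM => //; apply: componentMiota.
  by exists y; rewrite yE.
have Av' : A g^-1^-1%g u by rewrite invgK.
pose a x := xchoose (conj_iota u v g x Au Av).
pose b x := xchoose (conj_iota v u g^-1%g x Av Av').
have aE x : iota (a x) = u * iota x * v by apply/eqP/(xchooseP (conj_iota _ _ _ x Au Av)).
have bE x : iota (b x) = v * iota x * u by apply/eqP/(xchooseP (conj_iota _ _ _ x Av Av')).
exists a; split=> //; split.
- exists b => x; apply: iota_inj; rewrite ?aE bE ?aE !mulrA ?vu ?uv mul1r.
    by rewrite -mulrA vu mulr1.
  by rewrite -mulrA uv mulr1.
- by move=> x y; apply: iota_inj; rewrite rmorphD !aE rmorphD mulrDr mulrDl.
- move=> x y; apply: iota_inj; rewrite rmorphM !aE rmorphM.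
  by rewrite !mulrA -[u * iota x * v * u]mulrA vu mulr1.
- by apply: iota_inj; rewrite aE !rmorph1 mulr1 uv.
- move=> k x; apply: iota_inj.
  have scaleE (z : L) : k *: z = k *: 1 * z by rewrite -scalerAl mul1r.
  rewrite aE scaleE [k *: a x]scaleE !rmorphM aE.
  by rewrite !mulrA -(iota_scalar_central k u).
Qed.

Variables (e : L).
Hypothesis he : e * e = e.

Let iota_e_idem : iota e * iota e = iota e.
Proof. by rewrite -rmorphM he. Qed.

Lemma corner_component_zmod g :
  corner_component A (iota e) g 0 /\
  forall x y, corner_component A (iota e) g x -> corner_component A (iota e) g y ->
    corner_component A (iota e) g (x - y).
Proof.
split; first by exists 0; rewrite mulr0 mul0r; split; first exact: component0.
move=> _ _ [x [Ax ->]] [y [Ay ->]]; exists (x - y).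
by rewrite mulrBr mulrBl; split; first exact: componentB.
Qed.

Lemma corner_componentM g h x y :
  corner_component A (iota e) g x -> corner_component A (iota e) h y ->
  corner_component A (iota e) (g * h)%g (x * y).
Proof.
move=> [x' [Ax ->]] [y' [Ay ->]]; exists (x' * iota e * y'); split.
  by apply: componentM => //; apply: componentMiota.
by rewrite !mulrA -[iota e * x' * iota e * iota e]mulrA iota_e_idem.
Qed.

Lemma corner_decomposition x : corner (iota e) x ->
  exists c : gT -> T, (forall g, corner_component A (iota e) g (c g)) /\ x = \sum_g c g.
Proof.
move=> [y ->]; have [c [Ac ->]] := component_decomposition y.
exists (fun g => iota e * c g * iota e); split; first by move=> g; exists (c g).
by rewrite mulr_sumr mulr_suml.
Qed.

Lemma corner_component_sum_eq0 (c : gT -> T) :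
  (forall g, corner_component A (iota e) g (c g)) -> \sum_g c g = 0 ->
  forall g, c g = 0.
Proof.
move=> Ac; apply: component_sum_eq0 => g.
by have [x [Ax ->]] := Ac g; apply/componentMiota/componentiotaM.
Qed.

Lemma corner_component1P x :
  corner_component A (iota e) 1%g x <-> exists2 b, corner e b & x = iota b.
Proof.
split=> [[_ [/component1P [b ->] ->]] | [_ [b ->] ->]].
  by exists (e * b * e); [exists b | rewrite !rmorphM].
by exists (iota b); rewrite !rmorphM; split; first exact: component_iota.
Qed.

Lemma corner_scalar_central (k : O) x :
  corner (iota e) x -> iota (k *: e) * x = x * iota (k *: e).
Proof.
move=> /(corner_idem iota_e_idem) [ex xe].
rewrite -[e]mul1r scalerAl rmorphM -mulrA ex mulrA -iota_scalar_central.
by rewrite -mulrA xe.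
Qed.

Lemma corner_homogeneous_unit g :
    (forall a : L -> L, is_O_aut a -> right_mod_iso (rideal e) (rideal (a e))) ->
  exists u, corner_component A (iota e) g u /\
    exists v, corner (iota e) v /\ u * v = iota e /\ v * u = iota e.
Proof.
move=> hiso; have [u [Au [v [uv vu]]]] := homogeneous_unit_exists g.
have [a [aut aE]] := homogeneous_unit_conj_aut Au uv vu.
have ae_idem : a e * a e = a e.
  apply: iota_inj; rewrite rmorphM aE !mulrA -[_ * v * u]mulrA vu mulr1.
  by rewrite -[u * iota e * iota e]mulrA iota_e_idem.
have [x [y [ex ye xy yx]]] := right_mod_iso_idem_equiv he ae_idem (hiso a aut).
have [xuE vyE xuvy vyxu] : [/\ iota x * u = iota e * (iota x * u) * iota e,
    v * iota y = iota e * (v * iota y) * iota e,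
    iota x * u * (v * iota y) = iota e & v * iota y * (iota x * u) = iota e].
  by apply: conj_idempotent_corner_unit; rewrite -?rmorphM ?ex ?ye ?xy ?yx ?aE.
exists (iota x * u); split; first by exists (iota x * u); split; first exact: componentiotaM.
by exists (v * iota y); split; first by exists (v * iota y).
Qed.

End CrossedProduct.

Theorem proposition4p15
    (O : idomainType) (p : nat)
    (hO : complete_DVR_char0_residue O p)
    (L : algType O) (hL : is_O_order L)
    (gT : finGroupType)
    (T : nzRingType) (iota : {rmorphism L -> T}) (A : gT -> T -> Prop)
    (hG : crossed_product_in (fun _ => True) 1 A (fun _ => True) 1 iota)
    (e : L) (he : e * e = e)
    (hiso : forall a : L -> L, is_O_aut a ->
              right_mod_iso (rideal e) (rideal (a e))) :
  crossed_product_in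
    (fun y => exists x, y = iota e * x * iota e)
    (iota e)
    (fun g y => exists x, A g x /\ y = iota e * x * iota e)
    (fun b => exists a, b = e * a * e) e iota.
Proof.
change (crossed_product_in (corner (iota e)) (iota e) (corner_component A (iota e))
  (corner e) e iota).
split.
- split; [by move=> g _ [x [_ ->]]; exists x | by move=> g; apply: corner_component_zmod |].
  by move=> g h x y; apply: corner_componentM.
- split; [by move=> x; apply: corner_decomposition | by move=> c; apply: corner_component_sum_eq0].
- split; [by move=> x; apply: corner_component1P | by move=> a b _ _ /(iota_inj hG) | | | by []].
    by move=> a b _ _; rewrite rmorphD.
  by move=> a b _ _; rewrite rmorphM.
- by move=> g; apply: corner_homogeneous_unit.
- by move=> k x; apply: (corner_scalar_central hG he).
Qed.
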